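(* For every integer $m\ge1$: \[\sum_{q=1}^{m-1}\frac{\binom{m}{q}\binom{m-1}{q+2}}{\binom{2m}{2q}} = \frac{1}{6}m^2 -\frac{13}{6}m -3 +\frac{5}{2}\,4^m\frac{(m!)^2}{(2m)!},\] \[\sum_{q=1}^{m-1}\frac{\binom{m}{q}\binom{m-1}{q+1}}{\binom{2m}{2q}} = m +2 -\frac{3}{2}\,4^m\frac{(m!)^2}{(2m)!},\] \[\sum_{q=1}^{m-1}\frac{\binom{m}{q}\binom{m-1}{q}}{\binom{2m}{2q}} = -1 +\frac{1}{2}\,4^m\frac{(m!)^2}{(2m)!}.\]
   Context: Binomial coefficients $\binom{n}{k}$ are zero when $k>n$ or $k<0$. *)

From mathcomp Require Import all_boot all_order all_algebra.
Set Implicit Arguments. Unset Strict Implicit. Unset Printing Implicit Defensive.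

From mathcomp Require Import all_boot all_order all_algebra.
From mathcomp Require Import ring lra zify.
Import GRing.Theory Num.Theory.
Local Open Scope ring_scope.

(* Put [cbin4 k = 'C(2k, k) / 4^k].  Then ['C(m, q)^2 / 'C(2m, 2q) = cbin4 q * cbin4 (m - q) / cbin4 m],
   and the weights [cbin4 q * cbin4 (n - q)], [0 <= q <= n], form the discrete arcsine
   distribution: the symmetry [q <-> n - q] together with [cbin4 (k+1) * (k+1) = cbin4 k * (k + 1/2)]
   shows that it has mass 1 and computes its first three moments as polynomials in [n].
   The factor ['C(m-1, q+j) / 'C(m, q)] is a falling factorial in [m - q] divided by
   [m (q+1)...(q+j)], and [cbin4 q / ((q+1)...(q+j))] is a [j]-th finite difference of [cbin4].
   After the reflection [q -> m - q] each of the resulting shifted sums is an arcsine mean at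
   level [m + i] minus a few boundary terms, so each identity reduces to a rational identity
   in [m] and [cbin4 m]. *)

Fixpoint cbin4 (k : nat) : rat :=
  if k is k'.+1 then cbin4 k' * (2 * k'%:R + 1) / (2 * k'%:R + 2) else 1.

Arguments cbin4 : simpl never.

Lemma cbin40 : cbin4 0 = 1.
Proof. by []. Qed.

Lemma cbin4S k : cbin4 k.+1 = cbin4 k * (2 * k%:R + 1) / (2 * k%:R + 2).
Proof. by []. Qed.

Lemma cbin4S_mul k : cbin4 k.+1 * (k%:R + 1) = cbin4 k * (k%:R + 2^-1).
Proof.
have k_ge0 : (0 : rat) <= k%:R by exact: ler0n.
by rewrite cbin4S; field; apply/eqP; lra.
Qed.

Lemma natr_fact_neq0 k : (k`!)%:R != 0 :> rat.
Proof. by rewrite pnatr_eq0 -lt0n fact_gt0. Qed.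

Lemma cbin4E k : cbin4 k = ((2 * k)`!)%:R / (4 ^+ k * (k`!)%:R ^+ 2).
Proof.
elim: k => [|k IH]; first by rewrite cbin40 muln0 fact0 /=; field.
have k_ge0 : (0 : rat) <= k%:R by exact: ler0n.
rewrite cbin4S IH mulnS !factS !natrM [4 ^+ k.+1]exprS.
have -> : ((2 * k).+2)%:R = 2 * k%:R + 2 :> rat by rewrite -!natr1 natrM; ring.
have -> : ((2 * k).+1)%:R = 2 * k%:R + 1 :> rat by rewrite -natr1 natrM.
rewrite -[k.+1%:R]natr1.
by field; rewrite natr_fact_neq0 expf_neq0 //=; apply/andP; split; apply/eqP; lra.
Qed.

Lemma cbin4_neq0 k : cbin4 k != 0.
Proof.
by rewrite cbin4E mulf_neq0 ?invr_neq0 ?mulf_neq0 ?expf_neq0 ?natr_fact_neq0.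
Qed.

Lemma invr_cbin4 k : (cbin4 k)^-1 = 4 ^+ k * (k`!)%:R ^+ 2 / ((2 * k)`!)%:R.
Proof. by rewrite cbin4E invf_div. Qed.

Lemma cbin4_div1 k : cbin4 k / (k%:R + 1) = 2 * (cbin4 k - cbin4 k.+1).
Proof.
have k_ge0 : (0 : rat) <= k%:R by exact: ler0n.
by rewrite cbin4S; field; apply/andP; split; apply/eqP; lra.
Qed.

Lemma cbin4_div2 k :
  cbin4 k / ((k%:R + 1) * (k%:R + 2)) = 4 / 3 * (cbin4 k - 2 * cbin4 k.+1 + cbin4 k.+2).
Proof.
have k_ge0 : (0 : rat) <= k%:R by exact: ler0n.
rewrite !cbin4S -natr1.
by field; apply/and4P; split; apply/eqP; lra.
Qed.

Lemma natr_bin [n k : nat] : (k <= n)%N ->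
  'C(n, k)%:R = (n`!)%:R / ((k`!)%:R * ((n - k)`!)%:R) :> rat.
Proof.
by move=> le_kn; rewrite -(bin_fact le_kn) !natrM; field; rewrite !natr_fact_neq0.
Qed.

Lemma sqr_bin_div_bin_double m q : (q <= m)%N ->
  'C(m, q)%:R ^+ 2 / 'C(2 * m, 2 * q)%:R = cbin4 q * cbin4 (m - q) / cbin4 m :> rat.
Proof.
move=> le_qm; have le2 : (2 * q <= 2 * m)%N by rewrite leq_mul2l le_qm orbT.
rewrite (natr_bin le_qm) (natr_bin le2) -mulnBr !cbin4E.
have -> : (4 : rat) ^+ m = 4 ^+ q * 4 ^+ (m - q) by rewrite -exprD subnKC.
by field; rewrite !natr_fact_neq0 !expf_neq0.
Qed.

Lemma natr_mul_bin_down m k :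
  m%:R * 'C(m.-1, k)%:R = (m%:R - k%:R) * 'C(m, k)%:R :> rat.
Proof.
have [le_km | lt_mk] := leqP k m; first by rewrite -natrB // -!natrM mul_bin_down.
by rewrite !bin_small ?mulr0 //; case: m lt_mk => // m /ltnW.
Qed.

Lemma natr_mul_bin_left m k :
  (k%:R + 1) * 'C(m, k.+1)%:R = (m%:R - k%:R) * 'C(m, k)%:R :> rat.
Proof.
have [le_km | lt_mk] := leqP k m.
  by rewrite -natrB // natr1 -!natrM mul_bin_left.
by rewrite !bin_small ?mulr0 // ltnW.
Qed.

Definition arcsine_mean n (P : rat -> rat) :=
  \sum_(0 <= q < n.+1) cbin4 q * cbin4 (n - q) * P q%:R.

Lemma eq_arcsine_mean n (P Q : rat -> rat) :
  P =1 Q -> arcsine_mean n P = arcsine_mean n Q.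
Proof. by move=> eqPQ; apply: eq_bigr => q _; rewrite eqPQ. Qed.

Lemma arcsine_meanD n a b (P Q : rat -> rat) :
  arcsine_mean n (fun x => a * P x + b * Q x) = a * arcsine_mean n P + b * arcsine_mean n Q.
Proof. by rewrite /arcsine_mean !mulr_sumr -big_split /=; apply: eq_bigr => q _; ring. Qed.

Lemma arcsine_mean_rev n (P : rat -> rat) :
  arcsine_mean n P = arcsine_mean n (fun x => P (n%:R - x)).
Proof.
rewrite /arcsine_mean big_nat_rev; apply: eq_big_nat => q /andP[_ lt_qn].
by rewrite add0n subSS subKn // natrB //; ring.
Qed.

Lemma arcsine_meanSX n (P : rat -> rat) :
  arcsine_mean n.+1 (fun x => x * P x) = arcsine_mean n (fun x => (x + 2^-1) * P (x + 1)).
Proof.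
rewrite /arcsine_mean big_nat_recl // mul0r mulr0 add0r; apply: eq_bigr => q _.
rewrite subSS -natr1.
transitivity (cbin4 q.+1 * (q%:R + 1) * cbin4 (n - q) * P (q%:R + 1)); first by ring.
by rewrite cbin4S_mul; ring.
Qed.

Lemma arcsine_mean1 n : arcsine_mean n (fun=> 1) = 1.
Proof.
(* Symmetry gives [2 E_k[x] = k E_k[1]], the shift gives [E_(n+1)[x] = E_n[x] + E_n[1] / 2]. *)
have mean_id k : 2 * arcsine_mean k id = k%:R * arcsine_mean k (fun=> 1).
  rewrite mulr2n mulrDl mul1r {2}arcsine_mean_rev.
  rewrite (@eq_arcsine_mean _ (fun x => k%:R - x) (fun x => k%:R * 1 + (-1) * x)).
    by rewrite arcsine_meanD; ring.
  by move=> x; ring.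
elim: n => [|n IH]; first by rewrite /arcsine_mean big_nat1.
have meanS_id : arcsine_mean n.+1 id = arcsine_mean n id + 2^-1 * arcsine_mean n (fun=> 1).
  rewrite (@eq_arcsine_mean _ _ (fun x => x * 1)); last by move=> x; ring.
  rewrite arcsine_meanSX (@eq_arcsine_mean _ _ (fun x => 1 * x + 2^-1 * 1)).
    by rewrite arcsine_meanD mul1r.
  by move=> x; ring.
have := mean_id n.+1; rewrite meanS_id mulrDr mean_id IH -[n.+1%:R]natr1.
have n_ge0 : (0 : rat) <= n%:R by exact: ler0n.
move=> E; apply: (mulfI (x := n%:R + 1)); first by apply/eqP; lra.
by rewrite -E; field.
Qed.

Lemma arcsine_mean_cubic n a b c d :
  arcsine_mean n (fun x => a + b * x + c * x ^+ 2 + d * x ^+ 3) =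
  a + b * n%:R / 2 + c * (3 * n%:R ^+ 2 + n%:R) / 8 + d * (5 * n%:R ^+ 3 + 3 * n%:R ^+ 2) / 16.
Proof.
elim: n a b c d => [|n IH] a b c d; first by rewrite /arcsine_mean big_nat1 /= cbin40; field.
rewrite (@eq_arcsine_mean _ _ (fun x => a * 1 + 1 * (x * (b + c * x + d * x ^+ 2))));
  last by move=> x; ring.
rewrite arcsine_meanD arcsine_mean1 arcsine_meanSX.
rewrite (@eq_arcsine_mean _ _ (fun x => 2^-1 * (b + c + d) + ((b + c + d) + 2^-1 * (c + 2 * d)) * x
  + ((c + 2 * d) + 2^-1 * d) * x ^+ 2 + d * x ^+ 3)); last by move=> x; ring.
by rewrite IH -[n.+1%:R]natr1; field.
Qed.

Definition shifted_sum m i (Q : rat -> rat) :=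
  \sum_(1 <= q < m) cbin4 (q + i) * cbin4 (m - q) * Q (m - q)%:R.

Lemma shifted_sumE m i (Q : rat -> rat) : Q 0 = 0 ->
  shifted_sum m i Q =
  arcsine_mean (m + i) Q - \sum_(0 <= j < i.+1) cbin4 (m + j) * cbin4 (i - j) * Q (m + j)%:R.
Proof.
move=> Q0; have le_m_mi : (m <= (m + i).+1)%N by lia.
rewrite /arcsine_mean (@big_cat_nat _ _ _ m) //=.
have -> : \sum_(m <= r < (m + i).+1) cbin4 r * cbin4 (m + i - r) * Q r%:R =
    \sum_(0 <= j < i.+1) cbin4 (m + j) * cbin4 (i - j) * Q (m + j)%:R.
  rewrite -{1}[m]add0n big_addn -addnS addKn.
  by apply: eq_bigr => j _; rewrite [(j + m)%N]addnC subnDl.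
rewrite addrK /shifted_sum big_nat_rev.
case: m {le_m_mi} => [|m]; first by rewrite !big_geq.
rewrite [RHS]big_ltn // Q0 mulr0 add0r; apply: eq_big_nat => q /andP[_ lt_qm].
have -> : (1 + m.+1 - q.+1 = m.+1 - q)%N by lia.
have le_qm := ltnW lt_qm.
by rewrite subKn // -addnBAC // [cbin4 (_ + i) * _]mulrC.
Qed.

Lemma bin_bin_div_bin_double [m q k : nat] [r : rat] : (q <= m)%N ->
  'C(m.-1, k)%:R = 'C(m, q)%:R * r ->
  ('C(m, q) * 'C(m.-1, k))%:R / 'C(2 * m, 2 * q)%:R = cbin4 q * cbin4 (m - q) / cbin4 m * r.
Proof.
by move=> le_qm Ck; rewrite natrM Ck mulrA -expr2 mulrAC sqr_bin_div_bin_double.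
Qed.

Lemma natr_bin_pred m q : (0 < m)%N ->
  'C(m.-1, q)%:R = 'C(m, q)%:R * ((m%:R - q%:R) / m%:R) :> rat.
Proof.
move=> m_gt0; have m_neq0 : m%:R != 0 :> rat by rewrite pnatr_eq0 -lt0n.
by apply: (mulfI m_neq0); rewrite natr_mul_bin_down; field.
Qed.

Lemma natr_binS m q :
  'C(m, q.+1)%:R = 'C(m, q)%:R * ((m%:R - q%:R) / (q%:R + 1)) :> rat.
Proof.
have q1_neq0 : q%:R + 1 != 0 :> rat by rewrite natr1 pnatr_eq0.
by apply: (mulfI q1_neq0); rewrite natr_mul_bin_left; field.
Qed.

Lemma natr_bin_predS m q : (0 < m)%N ->
  'C(m.-1, q.+1)%:R =
  'C(m, q)%:R * ((m%:R - q%:R) * (m%:R - q%:R - 1) / (m%:R * (q%:R + 1))) :> rat.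
Proof.
move=> m_gt0; have m_neq0 : m%:R != 0 :> rat by rewrite pnatr_eq0 -lt0n.
have q1_neq0 : q%:R + 1 != 0 :> rat by rewrite natr1 pnatr_eq0.
by rewrite natr_bin_pred // natr_binS -natr1; field; rewrite m_neq0 q1_neq0.
Qed.

Lemma natr_bin_predSS m q : (0 < m)%N ->
  'C(m.-1, q.+2)%:R = 'C(m, q)%:R *
    ((m%:R - q%:R) * (m%:R - q%:R - 1) * (m%:R - q%:R - 2) /
     (m%:R * (q%:R + 1) * (q%:R + 2))) :> rat.
Proof.
move=> m_gt0; have m_neq0 : m%:R != 0 :> rat by rewrite pnatr_eq0 -lt0n.
have q_ge0 : (0 : rat) <= q%:R by exact: ler0n.
rewrite natr_bin_pred // !natr_binS -!natr1.
by field; rewrite m_neq0 andbT; apply/andP; split; apply/eqP; lra.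
Qed.

Lemma bin_bin_pred_term m q : (0 < m)%N -> (q <= m)%N ->
  ('C(m, q) * 'C(m.-1, q))%:R / 'C(2 * m, 2 * q)%:R =
  (m%:R * cbin4 m)^-1 * (cbin4 q * cbin4 (m - q) * (m - q)%:R).
Proof.
move=> m_gt0 le_qm; have m_neq0 : m%:R != 0 :> rat by rewrite pnatr_eq0 -lt0n.
rewrite (bin_bin_div_bin_double le_qm (natr_bin_pred m q m_gt0)) natrB //.
by field; rewrite m_neq0 cbin4_neq0.
Qed.

Lemma bin_bin_predS_term m q : (0 < m)%N -> (q <= m)%N ->
  ('C(m, q) * 'C(m.-1, q + 1))%:R / 'C(2 * m, 2 * q)%:R =
  (m%:R * cbin4 m)^-1 *
  (2 * (cbin4 q - cbin4 q.+1) * cbin4 (m - q) * ((m - q)%:R * ((m - q)%:R - 1))).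
Proof.
move=> m_gt0 le_qm; have m_neq0 : m%:R != 0 :> rat by rewrite pnatr_eq0 -lt0n.
have q1_neq0 : q%:R + 1 != 0 :> rat by rewrite natr1 pnatr_eq0.
rewrite addn1 (bin_bin_div_bin_double le_qm (natr_bin_predS m q m_gt0)) natrB //.
by rewrite -cbin4_div1; field; rewrite m_neq0 q1_neq0 cbin4_neq0.
Qed.

Lemma bin_bin_predSS_term m q : (0 < m)%N -> (q <= m)%N ->
  ('C(m, q) * 'C(m.-1, q + 2))%:R / 'C(2 * m, 2 * q)%:R =
  (m%:R * cbin4 m)^-1 *
  (4 / 3 * (cbin4 q - 2 * cbin4 q.+1 + cbin4 q.+2) * cbin4 (m - q) *
   ((m - q)%:R * ((m - q)%:R - 1) * ((m - q)%:R - 2))).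
Proof.
move=> m_gt0 le_qm; have m_neq0 : m%:R != 0 :> rat by rewrite pnatr_eq0 -lt0n.
have q_ge0 : (0 : rat) <= q%:R by exact: ler0n.
rewrite addn2 (bin_bin_div_bin_double le_qm (natr_bin_predSS m q m_gt0)) natrB //.
rewrite -cbin4_div2; field; rewrite m_neq0 cbin4_neq0 /=.
by rewrite andbT; apply/andP; split; apply/eqP; lra.
Qed.

Lemma sum_bin_bin_pred m : (0 < m)%N ->
  \sum_(1 <= q < m) ('C(m, q) * 'C(m.-1, q))%:R / 'C(2 * m, 2 * q)%:R =
  - 1 + 2^-1 / cbin4 m.
Proof.
move=> m_gt0; have m_neq0 : m%:R != 0 :> rat by rewrite pnatr_eq0 -lt0n.
under eq_big_nat => q /andP[_ /ltnW le_qm] do rewrite bin_bin_pred_term //.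
rewrite -mulr_sumr.
have -> : \sum_(1 <= q < m) cbin4 q * cbin4 (m - q) * (m - q)%:R = shifted_sum m 0 id.
  by apply: eq_bigr => q _; rewrite addn0.
rewrite shifted_sumE // big_nat1 !addn0 subnn.
rewrite (@eq_arcsine_mean _ id (fun x => 0 + 1 * x + 0 * x ^+ 2 + 0 * x ^+ 3));
  last by move=> x; ring.
by rewrite arcsine_mean_cubic cbin40; field; rewrite m_neq0 cbin4_neq0.
Qed.

Lemma sum_bin_bin_predS m : (0 < m)%N ->
  \sum_(1 <= q < m) ('C(m, q) * 'C(m.-1, q + 1))%:R / 'C(2 * m, 2 * q)%:R =
  m%:R + 2%:R - 3%:R / 2%:R / cbin4 m.
Proof.
move=> m_gt0; have m_neq0 : m%:R != 0 :> rat by rewrite pnatr_eq0 -lt0n.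
have m_ge0 : (0 : rat) <= m%:R by exact: ler0n.
pose Q (y : rat) := y * (y - 1).
under eq_big_nat => q /andP[_ /ltnW le_qm] do rewrite bin_bin_predS_term //.
rewrite -mulr_sumr.
have -> : \sum_(1 <= q < m) 2 * (cbin4 q - cbin4 q.+1) * cbin4 (m - q) *
      ((m - q)%:R * ((m - q)%:R - 1)) = 2 * shifted_sum m 0 Q - 2 * shifted_sum m 1 Q.
  rewrite /shifted_sum !mulr_sumr -sumrB.
  by apply: eq_bigr => q _; rewrite addn0 addn1 /Q; ring.
rewrite !shifted_sumE ?mul0r // !big_nat_recr //= !big_geq // !add0r.
rewrite !(@eq_arcsine_mean _ Q (fun x => 0 + (-1) * x + 1 * x ^+ 2 + 0 * x ^+ 3));
  try by move=> x; rewrite /Q; ring.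
rewrite !arcsine_mean_cubic /Q !addn0 !addn1 !cbin4S cbin40 -[m.+1%:R]natr1.
by field; rewrite cbin4_neq0 m_neq0 andbT; apply/eqP; lra.
Qed.

Lemma sum_bin_bin_predSS m : (0 < m)%N ->
  \sum_(1 <= q < m) ('C(m, q) * 'C(m.-1, q + 2))%:R / 'C(2 * m, 2 * q)%:R =
  6^-1 * m%:R ^+ 2 - 13%:R / 6%:R * m%:R - 3%:R + 5%:R / 2%:R / cbin4 m.
Proof.
move=> m_gt0; have m_neq0 : m%:R != 0 :> rat by rewrite pnatr_eq0 -lt0n.
have m_ge0 : (0 : rat) <= m%:R by exact: ler0n.
pose Q (y : rat) := y * (y - 1) * (y - 2).
under eq_big_nat => q /andP[_ /ltnW le_qm] do rewrite bin_bin_predSS_term //.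
rewrite -mulr_sumr.
have -> : \sum_(1 <= q < m) 4 / 3 * (cbin4 q - 2 * cbin4 q.+1 + cbin4 q.+2) * cbin4 (m - q) *
      ((m - q)%:R * ((m - q)%:R - 1) * ((m - q)%:R - 2)) =
    4 / 3 * (shifted_sum m 0 Q - 2 * shifted_sum m 1 Q + shifted_sum m 2 Q).
  rewrite /shifted_sum !mulr_sumr -sumrB -big_split /= mulr_sumr.
  by apply: eq_bigr => q _; rewrite addn0 addn1 addn2 /Q; ring.
rewrite !shifted_sumE ?mul0r // !big_nat_recr //= !big_geq // !add0r.
rewrite !(@eq_arcsine_mean _ Q (fun x => 0 + 2 * x + (-3) * x ^+ 2 + 1 * x ^+ 3));
  try by move=> x; rewrite /Q; ring.
rewrite !arcsine_mean_cubic /Q !addn0 !addn1 !addn2 !cbin4S cbin40.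
rewrite -[m.+2%:R]natr1 -[m.+1%:R]natr1.
by field; rewrite cbin4_neq0 m_neq0 andbT /=; apply/andP; split; apply/eqP; lra.
Qed.

Theorem propositionA1 (m : nat) (hm : (1 <= m)%N) :
  let c := (4 ^+ m * (m`!)%:R ^+ 2 / ((2 * m)`!)%:R : rat) in
  [/\ \sum_(1 <= q < m) (('C(m, q) * 'C(m.-1, q + 2))%:R / ('C(2 * m, 2 * q))%:R : rat)
        = 6^-1 * (m%:R) ^+ 2 - 13%:R / 6%:R * m%:R - 3%:R + 5%:R / 2%:R * c,
      \sum_(1 <= q < m) (('C(m, q) * 'C(m.-1, q + 1))%:R / ('C(2 * m, 2 * q))%:R : rat)
        = m%:R + 2%:R - 3%:R / 2%:R * c
    & \sum_(1 <= q < m) (('C(m, q) * 'C(m.-1, q))%:R / ('C(2 * m, 2 * q))%:R : rat)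
        = - 1 + 2^-1 * c].
Proof.
rewrite /= -invr_cbin4.
by split; [exact: sum_bin_bin_predSS | exact: sum_bin_bin_predS | exact: sum_bin_bin_pred].
Qed.
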